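(* Let $S_1=\sum_{k=0}^\infty\frac{1}{(3k+2)(3k+4)}=\frac12-\frac{\sqrt3\pi}{18}$. Then \begin{align*} &\sum_{n=0}^\infty \frac{1}{(3n+1)(3n+4)\binom{2n+2}{n+1}}=\frac23 S_1,\\ &\sum_{n=0}^\infty \frac{(27n^2+51n+23)(\frac23)_n}{(3n+1)(3n+4)(n+1)(\frac{11}{6})_n}\,\frac{1}{4^n}=30S_1,\\ &\sum_{n=0}^\infty \frac{189n^3+495n^2+414n+110}{(6n+1)(6n+7)(6n+5)(2n+1)}\,\frac{1}{\binom{6n}{3n}}=16S_1,\\ &\sum_{n=0}^\infty \frac{270n^3+720n^2+633n+185}{(n+1)(6n+7)}\,\frac{(\frac23)_n^2}{(\frac43)_n(\frac{11}{6})_n}\,\frac{1}{(-4)^n}=120S_1,\\ &\sum_{n=0}^\infty (30n^2+45n+16)\,\frac{(\frac16)_n(\frac23)_n^2(1)_n}{(\frac43)_n(\frac73)_n(\frac32)_n(\frac{11}{6})_n}\,\frac{1}{(-4)^n}=80S_1. \end{align*}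
   Context: $(x)_n=\Gamma(x+n)/\Gamma(x)=x(x+1)\cdots(x+n-1)$ denotes the rising factorial (Pochhammer symbol). *)

From Stdlib Require Import Reals.
From Coquelicot Require Import Coquelicot.
Open Scope R_scope.

Fixpoint poch (x : R) (n : nat) : R :=
  match n with
  | O => 1
  | S m => poch x m * (x + INR m)
  end.

Definition S1_term (k : nat) : R := / ((3 * INR k + 2) * (3 * INR k + 4)).

Definition binom (n k : nat) : R := Binomial.C n k.

(* Each series is the diagonal [G 0 n] of a Wilf-Zeilberger pair: a pair of
   hypergeometric terms with [F k n - F k (n+1) = G k n - G (k+1) n], where
   [G = F * cert] for a rational certificate and [F k 0 = c * S1_term k].
   As [F] decays geometrically in [n] and [G k n] vanishes as [k] grows,
   the series sums to [c * S1].

   For [S1] itself, [2 * S1_term k = 1/(3k+2) - 1/(3k+4)], so [2 S1] is the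
   integral over [0, 1] of [x (1 + x) / (1 + x + x^2) = 1 - 1/(1 + x + x^2)],
   i.e. [1 - pi / (3 sqrt 3)]. Instead of integrating, the mean value theorem
   is applied to an explicit antiderivative of the N-th remainder. *)

From Stdlib Require Import Reals Lra Lia Factorial.
From Coquelicot Require Import Coquelicot.
Open Scope R_scope.

Ltac nonneg_poly :=
  repeat (apply Rplus_le_le_0_compat || apply Rmult_le_pos || apply pow_le);
  try lra; try apply pos_INR.

Lemma poch_S a n : poch a (S n) = poch a n * (a + INR n).
Proof. reflexivity. Qed.

Lemma poch_pos a n : 0 < a -> 0 < poch a n.
Proof.
  intro Ha; induction n as [|n IH]; simpl; [lra|].
  apply Rmult_lt_0_compat; [exact IH|]. pose proof (pos_INR n); lra.
Qed.

Lemma poch_shift a n : 0 < a -> poch (a + 1) n = poch a n * (a + INR n) / a.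
Proof.
  intro Ha; induction n as [|n IH]; [simpl; field; lra|].
  cbn [poch]. rewrite IH, S_INR. field. lra.
Qed.

Definition poch_ratio a n := poch a n / poch a (2 * n + 1).

Lemma poch_ratio_pos a n : 0 < a -> 0 < poch_ratio a n.
Proof.
  intro Ha. apply Rdiv_lt_0_compat; apply poch_pos; lra.
Qed.

Lemma poch_ratio_S a n : 0 < a ->
  poch_ratio a (S n) = poch_ratio a n * (a + INR n) / ((a + 2 * INR n + 1) * (a + 2 * INR n + 2)).
Proof.
  intro Ha. unfold poch_ratio.
  replace (2 * S n + 1)%nat with (S (S (2 * n + 1))) by lia.
  cbn [poch]. rewrite !S_INR, plus_INR, mult_INR. simpl (INR 2); simpl (INR 1).
  pose proof (pos_INR n). pose proof (poch_pos a n Ha). pose proof (poch_pos a (2 * n + 1) Ha).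
  field. repeat split; lra.
Qed.

Lemma poch_ratio_shift a n : 0 < a ->
  poch_ratio (a + 1) n = poch_ratio a n * (a + INR n) / (a + 2 * INR n + 1).
Proof.
  intro Ha. unfold poch_ratio. rewrite !poch_shift by lra.
  rewrite plus_INR, mult_INR. simpl (INR 2); simpl (INR 1).
  pose proof (pos_INR n). pose proof (poch_pos a n Ha). pose proof (poch_pos a (2 * n + 1) Ha).
  field. repeat split; lra.
Qed.

Lemma INR_fact_S m : INR (fact (S m)) = (INR m + 1) * INR (fact m).
Proof. change (fact (S m)) with (S m * fact m)%nat. rewrite mult_INR, S_INR. ring. Qed.

Lemma binom_pos n k : 0 < binom n k.
Proof.
  unfold binom, Binomial.C.
  apply Rdiv_lt_0_compat; [|apply Rmult_lt_0_compat]; apply INR_fact_lt_0.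
Qed.

Lemma binom_2n2_S n :
  binom (2 * S n + 2) (S n + 1) =
  binom (2 * n + 2) (n + 1) * ((2 * INR n + 3) * (2 * INR n + 4)) / ((INR n + 2) * (INR n + 2)).
Proof.
  unfold binom, Binomial.C.
  replace (2 * S n + 2 - (S n + 1))%nat with (S (S n)) by lia.
  replace (2 * n + 2 - (n + 1))%nat with (S n) by lia.
  replace (S n + 1)%nat with (S (S n)) by lia.
  replace (n + 1)%nat with (S n) by lia.
  replace (2 * S n + 2)%nat with (S (S (2 * n + 2))) by lia.
  rewrite (INR_fact_S (S (2 * n + 2))), (INR_fact_S (2 * n + 2)), (INR_fact_S (S n)).
  rewrite !S_INR, !plus_INR, !mult_INR. simpl (INR 2).
  pose proof (INR_fact_neq_0 (S n)). pose proof (INR_fact_neq_0 (2 * n + 2)).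
  pose proof (pos_INR n).
  field. repeat split; lra.
Qed.

Lemma binom_6n_S n :
  binom (6 * S n) (3 * S n) =
  binom (6 * n) (3 * n) * ((6 * INR n + 1) * (6 * INR n + 2) * (6 * INR n + 3) *
     (6 * INR n + 4) * (6 * INR n + 5) * (6 * INR n + 6)) /
   ((3 * INR n + 1) * (3 * INR n + 2) * (3 * INR n + 3)) ^ 2.
Proof.
  unfold binom, Binomial.C.
  replace (6 * S n - 3 * S n)%nat with (S (S (S (3 * n)))) by lia.
  replace (6 * n - 3 * n)%nat with (3 * n)%nat by lia.
  replace (3 * S n)%nat with (S (S (S (3 * n)))) by lia.
  replace (6 * S n)%nat with (S (S (S (S (S (S (6 * n))))))) by lia.
  rewrite !INR_fact_S, !S_INR, !mult_INR. simpl (INR 6); simpl (INR 3).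
  pose proof (INR_fact_neq_0 (3 * n)). pose proof (INR_fact_neq_0 (6 * n)).
  pose proof (pos_INR n).
  field. repeat split; lra.
Qed.

Lemma is_lim_seq_geom_scal c q : 0 <= q < 1 -> is_lim_seq (fun n => c * q ^ n) 0.
Proof.
  intro Hq. replace (Finite 0) with (Rbar_mult c 0) by (simpl; f_equal; ring).
  apply is_lim_seq_scal_l, is_lim_seq_geom. rewrite Rabs_right; lra.
Qed.

Lemma is_lim_seq_inv_INR_S : is_lim_seq (fun k => / (INR k + 1)) 0.
Proof.
  replace (Finite 0) with (Rbar_inv p_infty) by reflexivity.
  apply is_lim_seq_inv; [|discriminate].
  apply is_lim_seq_le_p_loc with INR; [|apply is_lim_seq_INR].
  exists O. intros n _. lra.
Qed.

Lemma is_lim_seq_harmonic_bound (g : nat -> R) D :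
  (forall k, Rabs (g k) <= D / (INR k + 1)) -> is_lim_seq g 0.
Proof.
  intro Hg. apply is_lim_seq_abs_0.
  apply is_lim_seq_le_le with (fun _ => 0) (fun k => D * / (INR k + 1)).
  - intro k. split; [apply Rabs_pos | apply Hg].
  - apply is_lim_seq_const.
  - replace (Finite 0) with (Rbar_mult D 0) by (simpl; f_equal; ring).
    apply is_lim_seq_scal_l, is_lim_seq_inv_INR_S.
Qed.

Lemma sum_n_telescope (u : nat -> R) n :
  sum_n (fun k => u k - u (S k)) n = u O - u (S n).
Proof.
  induction n as [|n IH]; [now rewrite sum_O|].
  rewrite sum_Sn, IH. unfold plus; simpl. ring.
Qed.

Lemma is_series_telescope (u : nat -> R) :
  is_lim_seq u 0 -> is_series (fun k => u k - u (S k)) (u O).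
Proof.
  intro Hu.
  apply (is_lim_seq_ext (fun n => u O - u (S n)) (sum_n (fun k => u k - u (S k))) (u O)).
  { intro n. now rewrite sum_n_telescope. }
  replace (Finite (u O)) with (Rbar_minus (u O) 0) by (simpl; f_equal; ring).
  apply is_lim_seq_minus'; [apply is_lim_seq_const|].
  exact (proj1 (is_lim_seq_incr_1 u 0) Hu).
Qed.

Lemma geometric_ratio_bound (F r : nat -> R) q :
  0 <= q -> (forall n, F (S n) = F n * r n) -> (forall n, Rabs (r n) <= q) ->
  forall n, Rabs (F n) <= Rabs (F O) * q ^ n.
Proof.
  intros Hq HF Hr n. induction n as [|n IH]; [simpl; lra|].
  rewrite HF, Rabs_mult, <- tech_pow_Rmult.
  replace (Rabs (F O) * (q * q ^ n)) with (Rabs (F O) * q ^ n * q) by ring.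
  apply Rmult_le_compat; try apply Rabs_pos; auto.
Qed.

(* Wilf-Zeilberger summation: summing [F k n - F k (S n) = G k n - G (S k) n]
   over k gives [W n - W (S n) = G 0 n] for [W n := sum_k F k n], which then
   telescopes in n from [W 0 = c * L] to [lim W = 0]. *)
Lemma wz_series (a b beta : nat -> R) (F G : nat -> nat -> R) (c L : R) :
  is_series b L ->
  (forall k, 0 <= b k) ->
  (forall k, F k O = c * b k) ->
  (forall k n, F k n - F k (S n) = G k n - G (S k) n) ->
  (forall n, is_lim_seq (fun k => G k n) 0) ->
  (forall n, G O n = a n) ->
  (forall k n, Rabs (F k n) <= beta n * b k) ->
  is_lim_seq beta 0 ->
  is_series a (c * L).
Proof.
  intros Hb Hb0 HF0 Hwz HG HGa HFb Hbeta.
  assert (Hexb : ex_series b) by (exists L; exact Hb).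
  assert (HexF : forall n, ex_series (fun k => F k n)).
  { intro n. apply (ex_series_le (fun k => F k n) (fun k => beta n * b k)); [intro k; apply HFb|].
    exact (ex_series_scal_l (beta n) b Hexb). }
  set (W := fun n => Series (fun k => F k n)).
  assert (HW : forall n, a n = W n - W (S n)).
  { intro n.
    assert (HG0 : is_series (fun k => F k n - F k (S n)) (G O n)).
    { apply is_series_ext with (fun k => G k n - G (S k) n); [intro k; now rewrite Hwz|].
      now apply is_series_telescope. }
    assert (HWn : is_series (fun k => F k n - F k (S n)) (W n - W (S n))).
    { apply (is_series_minus (fun k => F k n) (fun k => F k (S n)));
        apply Series_correct, HexF. }
    rewrite <- HGa, <- (is_series_unique _ _ HG0). exact (is_series_unique _ _ HWn). }
  assert (HW0 : W O = c * L).
  { apply is_series_unique. apply is_series_ext with (fun k => c * b k).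
    - intro k. now rewrite HF0.
    - exact (is_series_scal_l c b L Hb). }
  assert (HWb : forall n, Rabs (W n) <= beta n * L).
  { intro n. eapply Rle_trans; [apply Series_Rabs|].
    - apply (ex_series_le (fun k => Rabs (F k n)) (fun k => beta n * b k));
        [|exact (ex_series_scal_l (beta n) b Hexb)].
      intro k. unfold norm; simpl. rewrite Rabs_Rabsolu. apply HFb.
    - replace (beta n * L) with (Series (fun k => beta n * b k))
        by exact (is_series_unique _ _ (is_series_scal_l (beta n) b L Hb)).
      apply Series_le; [|exact (ex_series_scal_l (beta n) b Hexb)].
      intro k. split; [apply Rabs_pos | apply HFb]. }
  assert (HWl : is_lim_seq W 0).
  { apply is_lim_seq_abs_0.
    apply is_lim_seq_le_le with (fun _ => 0) (fun n => beta n * L).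
    - intro n. split; [apply Rabs_pos | apply HWb].
    - apply is_lim_seq_const.
    - replace (Finite 0) with (Rbar_mult 0 L) by (simpl; f_equal; ring).
      now apply is_lim_seq_scal_r. }
  rewrite <- HW0.
  apply is_series_ext with (fun n => W n - W (S n)); [intro n; now rewrite HW|].
  now apply is_series_telescope.
Qed.

Lemma le_of_is_derive_nonneg (f df : R -> R) :
  (forall x, is_derive f x (df x)) -> (forall x, 0 <= x <= 1 -> 0 <= df x) -> f 0 <= f 1.
Proof.
  intros Hf Hdf.
  destruct (MVT_gen f 0 1 df) as [c [Hc Hmvt]].
  - intros x _. apply Hf.
  - intros x _. apply continuity_pt_filterlim, (ex_derive_continuous f x).
    exists (df x). apply Hf.
  - rewrite Rmin_left, Rmax_right in Hc by lra.
    specialize (Hdf c Hc). nra.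
Qed.

Fixpoint S1_partial (N : nat) (x : R) : R :=
  match N with
  | O => 0
  | S M => S1_partial M x + (x ^ (3 * M + 2) / (3 * INR M + 2) - x ^ (3 * M + 4) / (3 * INR M + 4))
  end.

Lemma S1_partial_derive N x :
  is_derive (S1_partial N) x (x * (1 + x) * (1 - x ^ (3 * N)) / (1 + x + x * x)).
Proof.
  assert (Hq : 0 < 1 + x + x * x) by nra.
  induction N as [|N IH]; cbn [S1_partial].
  - apply (is_derive_ext (fun _ => 0)); [reflexivity|].
    replace (x * (1 + x) * (1 - x ^ (3 * 0)) / (1 + x + x * x)) with 0 by (simpl; field; lra).
    apply (is_derive_const 0).
  - pose proof (pos_INR N).
    replace (x * (1 + x) * (1 - x ^ (3 * S N)) / (1 + x + x * x))
      with (x * (1 + x) * (1 - x ^ (3 * N)) / (1 + x + x * x) + (x ^ (3 * N + 1) - x ^ (3 * N + 3)))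
      by (replace (3 * S N)%nat with (3 * N + 3)%nat by lia; rewrite !pow_add; simpl; field; lra).
    apply (is_derive_plus (S1_partial N)); [exact IH|].
    auto_derive; [lra|].
    change (N + (N + (N + 0)))%nat with (3 * N)%nat.
    replace (Init.Nat.pred (3 * N + 2)) with (3 * N + 1)%nat by lia.
    replace (Init.Nat.pred (3 * N + 4)) with (3 * N + 3)%nat by lia.
    rewrite !plus_INR, !mult_INR. simpl (INR 2); simpl (INR 3); simpl (INR 4).
    field. lra.
Qed.

Lemma atan_S1_derive x :
  is_derive (fun y => 2 / sqrt 3 * atan ((2 * y + 1) / sqrt 3)) x (/ (1 + x + x * x)).
Proof.
  pose proof Rlt_sqrt3_0 as Hs. pose proof (sqrt_sqrt 3 ltac:(lra)) as Hs2.
  assert (Hq : 0 < 1 + x + x * x) by nra.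
  auto_derive; [auto|].
  unfold Rsqr. field_simplify_eq; [|repeat split; nra].
  replace (sqrt 3 ^ 2) with 3 by (simpl; lra). ring.
Qed.

Definition S1_remainder N x := S1_partial N x - x + 2 / sqrt 3 * atan ((2 * x + 1) / sqrt 3).

Lemma S1_remainder_derive N x :
  is_derive (S1_remainder N) x (- (x ^ (3 * N) * x * (1 + x)) / (1 + x + x * x)).
Proof.
  assert (Hq : 0 < 1 + x + x * x) by nra.
  replace (- (x ^ (3 * N) * x * (1 + x)) / (1 + x + x * x))
    with (x * (1 + x) * (1 - x ^ (3 * N)) / (1 + x + x * x) - 1 + / (1 + x + x * x))
    by (field; lra).
  apply (is_derive_plus (fun y => S1_partial N y - y)); [|apply atan_S1_derive].
  apply (is_derive_minus (S1_partial N) (fun y => y)); [apply S1_partial_derive|].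
  apply (is_derive_id x).
Qed.

(* The lower bound comes from [S1_remainder N x + x ^ (3N+2) / (3N+2)], whose
   derivative [x ^ (3N+3) / (1 + x + x^2)] is nonnegative on [0, 1]. *)
Lemma S1_remainder_bounds N :
  - / (3 * INR N + 2) <= S1_remainder N 1 - S1_remainder N 0 <= 0.
Proof.
  assert (HN : 0 < 3 * INR N + 2) by (pose proof (pos_INR N); lra).
  split.
  - set (g x := S1_remainder N x + x ^ (3 * N + 2) / (3 * INR N + 2)).
    assert (Hg : g 0 <= g 1).
    { apply (le_of_is_derive_nonneg g (fun x => x ^ (3 * N) * (x * x * x) / (1 + x + x * x))).
      - intro x. assert (Hq : 0 < 1 + x + x * x) by nra.
        replace (x ^ (3 * N) * (x * x * x) / (1 + x + x * x))
          with (- (x ^ (3 * N) * x * (1 + x)) / (1 + x + x * x) + x ^ (3 * N + 1))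
          by (rewrite pow_add; simpl; field; lra).
        apply (is_derive_plus (S1_remainder N)); [apply S1_remainder_derive|].
        auto_derive; [auto|].
        change (N + (N + (N + 0)))%nat with (3 * N)%nat.
        replace (Init.Nat.pred (3 * N + 2)) with (3 * N + 1)%nat by lia.
        rewrite plus_INR, mult_INR. simpl (INR 2); simpl (INR 3). field. lra.
      - intros x Hx. apply Rdiv_le_0_compat; [|nra].
        apply Rmult_le_pos; [apply pow_le; lra|]. nra. }
    unfold g in Hg. rewrite pow1, pow_i in Hg by lia.
    replace (1 / (3 * INR N + 2)) with (/ (3 * INR N + 2)) in Hg by (field; lra).
    lra.
  - set (h x := - S1_remainder N x).
    assert (Hh : h 0 <= h 1).
    { apply (le_of_is_derive_nonneg h (fun x => x ^ (3 * N) * x * (1 + x) / (1 + x + x * x))).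
      - intro x. assert (Hq : 0 < 1 + x + x * x) by nra.
        replace (x ^ (3 * N) * x * (1 + x) / (1 + x + x * x))
          with (- (- (x ^ (3 * N) * x * (1 + x)) / (1 + x + x * x))) by (field; lra).
        apply (is_derive_opp (S1_remainder N)), S1_remainder_derive.
      - intros x Hx. apply Rdiv_le_0_compat; [|nra].
        apply Rmult_le_pos; [apply Rmult_le_pos; [apply pow_le|]|]; lra. }
    unfold h in Hh. lra.
Qed.

Lemma S1_partial_0 N : S1_partial N 0 = 0.
Proof.
  induction N as [|N IH]; cbn [S1_partial]; [reflexivity|].
  pose proof (pos_INR N). rewrite IH, !pow_i by lia. field. lra.
Qed.

Lemma S1_partial_1 M : S1_partial (S M) 1 = 2 * sum_n S1_term M.
Proof.
  unfold S1_term. induction M as [|M IH].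
  - cbn [S1_partial]. rewrite sum_O, !pow1. simpl. field.
  - cbn [S1_partial] in *. rewrite IH, sum_Sn, !pow1. unfold plus; cbn -[INR sum_n].
    rewrite S_INR. pose proof (pos_INR M). field. lra.
Qed.

Lemma S1_remainder_01 N :
  S1_remainder N 1 - S1_remainder N 0 = S1_partial N 1 - 2 * (1/2 - sqrt 3 * PI / 18).
Proof.
  pose proof Rlt_sqrt3_0 as Hs. pose proof (sqrt_sqrt 3 ltac:(lra)) as Hs2.
  unfold S1_remainder. rewrite S1_partial_0.
  replace ((2 * 1 + 1) / sqrt 3) with (tan (PI / 3)) by (rewrite tan_PI3; field_simplify_eq; lra).
  replace ((2 * 0 + 1) / sqrt 3) with (tan (PI / 6)) by (rewrite tan_PI6; field; lra).
  pose proof PI_RGT_0.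
  rewrite !atan_tan by lra.
  field_simplify_eq; [|lra]. replace (sqrt 3 ^ 2) with 3 by (simpl; lra). ring.
Qed.

Lemma S1_series : is_series S1_term (1/2 - sqrt 3 * PI / 18).
Proof.
  set (L := 1/2 - sqrt 3 * PI / 18).
  change (is_lim_seq (sum_n S1_term) L).
  apply (is_lim_seq_le_le (fun M => L - / (INR (S M) + 1) / 2) _ (fun _ => L)).
  - intro M. pose proof (S1_remainder_bounds (S M)) as Hb.
    rewrite S1_remainder_01, S1_partial_1 in Hb. fold L in Hb.
    assert (/ (3 * INR (S M) + 2) <= / (INR (S M) + 1)).
    { pose proof (pos_INR (S M)). apply Rinv_le_contravar; lra. }
    lra.
  - assert (H0 : is_lim_seq (fun M => / (INR (S M) + 1) / 2) 0).
    { replace (Finite 0) with (Rbar_mult 0 (/ 2)) by (simpl; f_equal; ring).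
      apply is_lim_seq_scal_r.
      exact (proj1 (is_lim_seq_incr_1 _ 0) is_lim_seq_inv_INR_S). }
    replace (Finite L) with (Rbar_minus L 0) by (simpl; f_equal; ring).
    exact (is_lim_seq_minus' _ _ _ _ (is_lim_seq_const L) H0).
  - apply is_lim_seq_const.
Qed.

Lemma S1_term_pos k : 0 < S1_term k.
Proof. unfold S1_term. pose proof (pos_INR k). apply Rinv_0_lt_compat. nra. Qed.

Lemma S1_term_le k : (INR k + 1) * S1_term k <= / (INR k + 1).
Proof.
  unfold S1_term. pose proof (pos_INR k).
  apply (Rmult_le_reg_r ((INR k + 1) * ((3 * INR k + 2) * (3 * INR k + 4)))); [nra|].
  field_simplify; nra.
Qed.

Lemma wz_series_S1 (a : nat -> R) (F cert r : nat -> nat -> R) (C : nat -> R) (c q : R) :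
  0 <= q < 1 ->
  (forall k, F k O = c * S1_term k) ->
  (forall k n, F k (S n) = F k n * r k n) ->
  (forall k n, Rabs (r k n) <= q) ->
  (forall k n, F k n - F k (S n) = F k n * cert k n - F (S k) n * cert (S k) n) ->
  (forall k n, Rabs (cert k n) <= C n * (INR k + 1)) ->
  (forall n, 0 < cert O n) ->
  a O = F O O * cert O O ->
  (forall n, a (S n) * cert O n = a n * r O n * cert O (S n)) ->
  is_series a (c * (1/2 - sqrt 3 * PI / 18)).
Proof.
  intros Hq HF0 HFS Hr Hwz Hcert Hcert0 Ha0 HaS.
  assert (HFb : forall k n, Rabs (F k n) <= Rabs c * q ^ n * S1_term k).
  { intros k n. eapply Rle_trans; [apply (geometric_ratio_bound (F k) (r k)); auto; lra|].
    rewrite HF0, Rabs_mult, (Rabs_pos_eq (S1_term k)) by apply Rlt_le, S1_term_pos.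
    apply Req_le. ring. }
  assert (Ha : forall n, a n = F O n * cert O n).
  { induction n as [|n IH]; [exact Ha0|].
    apply (Rmult_eq_reg_r (cert O n)); [|apply Rgt_not_eq, Hcert0].
    rewrite HaS, IH, HFS. ring. }
  apply (wz_series a S1_term (fun n => Rabs c * q ^ n) F (fun k n => F k n * cert k n)).
  - exact S1_series.
  - intro k. apply Rlt_le, S1_term_pos.
  - exact HF0.
  - exact Hwz.
  - intro n. apply (is_lim_seq_harmonic_bound _ (Rabs c * q ^ n * Rabs (C n))).
    intro k. rewrite Rabs_mult.
    assert (Hck : Rabs (cert k n) <= Rabs (C n) * (INR k + 1)).
    { eapply Rle_trans; [apply Hcert|]. pose proof (pos_INR k).
      apply Rmult_le_compat_r; [lra | apply Rle_abs]. }
    pose proof (S1_term_le k) as HS1.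
    apply Rle_trans with (Rabs c * q ^ n * Rabs (C n) * ((INR k + 1) * S1_term k)).
    + replace (Rabs c * q ^ n * Rabs (C n) * ((INR k + 1) * S1_term k))
        with ((Rabs c * q ^ n * S1_term k) * (Rabs (C n) * (INR k + 1))) by ring.
      apply Rmult_le_compat; auto using Rabs_pos.
    + unfold Rdiv. apply Rmult_le_compat_l; [|exact HS1].
      apply Rmult_le_pos; [apply Rmult_le_pos; [apply Rabs_pos | apply pow_le; lra] | apply Rabs_pos].
  - intro n. symmetry. apply Ha.
  - exact HFb.
  - apply is_lim_seq_geom_scal. exact Hq.
Qed.

Lemma Rabs_frac_le num den q : 0 <= num -> 0 < den -> num <= q * den -> Rabs (num / den) <= q.
Proof.
  intros Hnum Hden Hle. rewrite Rabs_pos_eq by (apply Rdiv_le_0_compat; lra).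
  apply (Rmult_le_reg_r den); [lra|]. field_simplify; lra.
Qed.

Fixpoint prod_upto (B : nat -> R) (n : nat) : R :=
  match n with
  | O => 1
  | S m => prod_upto B m * B m
  end.

Definition B1 n := (INR n + 1) * (3 * INR n + 1) * (3 * INR n + 5) / (18 * (2 * INR n + 1)).
Definition f1 k n := / (poch (INR k + 2/3) (S n) * poch (INR k + 4/3) (S n)).
Definition F1 k n := 2/27 * prod_upto B1 n * f1 k n.
Definition cert1 k n := (2 * INR k + 3 * INR n + 3) / (2 * (2 * INR n + 1)).
Definition ratio1 k n := (INR n + 1) * (3 * INR n + 1) * (3 * INR n + 5) /
  (18 * (2 * INR n + 1) * ((INR k + 2/3 + INR n + 1) * (INR k + 4/3 + INR n + 1))).

Lemma f1_S k n :
  f1 k (S n) = f1 k n / ((INR k + 2/3 + INR n + 1) * (INR k + 4/3 + INR n + 1)).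
Proof.
  unfold f1. rewrite (poch_S _ (S n)), (poch_S _ (S n)), S_INR.
  pose proof (pos_INR k). pose proof (pos_INR n).
  pose proof (poch_pos (INR k + 2/3) (S n)). pose proof (poch_pos (INR k + 4/3) (S n)).
  field. repeat split; lra.
Qed.

Lemma f1_succ_k k n : f1 (S k) n = f1 k n * ((INR k + 2/3) * (INR k + 4/3))
   / ((INR k + 2/3 + INR n + 1) * (INR k + 4/3 + INR n + 1)).
Proof.
  unfold f1. pose proof (pos_INR k). pose proof (pos_INR n).
  replace (INR (S k) + 2/3) with (INR k + 2/3 + 1) by (rewrite S_INR; ring).
  replace (INR (S k) + 4/3) with (INR k + 4/3 + 1) by (rewrite S_INR; ring).
  rewrite !poch_shift, S_INR by lra.
  pose proof (poch_pos (INR k + 2/3) (S n) ltac:(lra)).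
  pose proof (poch_pos (INR k + 4/3) (S n) ltac:(lra)).
  field. repeat split; lra.
Qed.

Lemma F1_0 k : F1 k O = 2/3 * S1_term k.
Proof.
  unfold F1, f1, S1_term. cbn [prod_upto poch]. simpl (INR 0).
  pose proof (pos_INR k). field. split; lra.
Qed.

Lemma F1_S k n : F1 k (S n) = F1 k n * ratio1 k n.
Proof.
  unfold F1, ratio1, B1. cbn [prod_upto]. rewrite f1_S.
  pose proof (pos_INR k). pose proof (pos_INR n). field. repeat split; lra.
Qed.

Lemma ratio1_le k n : Rabs (ratio1 k n) <= 1/4.
Proof.
  pose proof (pos_INR k). pose proof (pos_INR n).
  apply Rabs_frac_le; [nonneg_poly | repeat apply Rmult_lt_0_compat; lra |].
  apply Rge_le, Rminus_ge, Rle_ge. unfold Rminus. field_simplify. nonneg_poly.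
Qed.

Lemma F1_wz k n : F1 k n - F1 k (S n) = F1 k n * cert1 k n - F1 (S k) n * cert1 (S k) n.
Proof.
  unfold F1. cbn [prod_upto]. rewrite f1_S, f1_succ_k. unfold cert1, B1. rewrite S_INR.
  pose proof (pos_INR k). pose proof (pos_INR n). field. repeat split; lra.
Qed.

Lemma cert1_le k n : Rabs (cert1 k n) <= 20 * (INR n + 1) * (INR k + 1).
Proof.
  pose proof (pos_INR k). pose proof (pos_INR n).
  apply Rabs_frac_le; [lra | lra |].
  apply Rge_le, Rminus_ge, Rle_ge. unfold Rminus. field_simplify. nonneg_poly.
Qed.

Lemma cert1_pos k n : 0 < cert1 k n.
Proof. unfold cert1. pose proof (pos_INR k). pose proof (pos_INR n). apply Rdiv_lt_0_compat; lra. Qed.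

Definition term1 (n : nat) : R :=
  / ((3 * INR n + 1) * (3 * INR n + 4) * binom (2 * n + 2)%nat (n + 1)%nat).

Lemma term1_S n : term1 (S n) * cert1 O n = term1 n * ratio1 O n * cert1 O (S n).
Proof.
  unfold term1, ratio1, cert1. rewrite binom_2n2_S, S_INR. simpl (INR 0).
  pose proof (pos_INR n). pose proof (binom_pos (2 * n + 2) (n + 1)).
  field. repeat split; lra.
Qed.

Lemma series1 : is_series term1 (2/3 * (1/2 - sqrt 3 * PI / 18)).
Proof.
  apply (wz_series_S1 term1 F1 cert1 ratio1 (fun n => 20 * (INR n + 1)) (2/3) (1/4)).
  - lra.
  - exact F1_0.
  - exact F1_S.
  - exact ratio1_le.
  - exact F1_wz.
  - exact cert1_le.
  - intro n. apply cert1_pos.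
  - unfold term1, F1, f1, cert1, binom, Binomial.C. simpl. field.
  - exact term1_S.
Qed.

Definition B2 n := (3 * INR n + 1) / 3.
Definition f2 k n := poch_ratio (INR k + 2/3) n / (INR k + 4/3 + INR n).
Definition F2 k n := 10/3 * prod_upto B2 n * f2 k n.
Definition cert2 k n :=
  (INR k ^ 2 + 3 * (INR n + 1) * INR k + (27 * INR n ^ 2 + 51 * INR n + 23) / 9)
  / ((INR n + 1) * (INR k + 2 * INR n + 5/3)).
Definition ratio2 k n := (3 * INR n + 1) * (INR k + 2/3 + INR n) * (INR k + 4/3 + INR n) /
  (3 * ((INR k + 2/3 + 2 * INR n + 1) * (INR k + 2/3 + 2 * INR n + 2)) * (INR k + 4/3 + INR n + 1)).

Lemma f2_S k n : f2 k (S n) = f2 k n *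
  ((INR k + 2/3 + INR n) / ((INR k + 2/3 + 2 * INR n + 1) * (INR k + 2/3 + 2 * INR n + 2))
   * ((INR k + 4/3 + INR n) / (INR k + 4/3 + INR n + 1))).
Proof.
  unfold f2. pose proof (pos_INR k). pose proof (pos_INR n).
  rewrite poch_ratio_S, S_INR by lra.
  pose proof (poch_ratio_pos (INR k + 2/3) n ltac:(lra)).
  field. repeat split; lra.
Qed.

Lemma f2_succ_k k n : f2 (S k) n = f2 k n *
  ((INR k + 2/3 + INR n) / (INR k + 2/3 + 2 * INR n + 1)
   * ((INR k + 4/3 + INR n) / (INR k + 4/3 + INR n + 1))).
Proof.
  unfold f2. pose proof (pos_INR k). pose proof (pos_INR n).
  replace (INR (S k) + 2/3) with (INR k + 2/3 + 1) by (rewrite S_INR; ring).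
  rewrite poch_ratio_shift, S_INR by lra.
  pose proof (poch_ratio_pos (INR k + 2/3) n ltac:(lra)).
  field. repeat split; lra.
Qed.

Lemma F2_0 k : F2 k O = 30 * S1_term k.
Proof.
  unfold F2, f2, poch_ratio, S1_term. cbn [prod_upto]. simpl (2 * 0 + 1)%nat.
  cbn [poch]. simpl (INR 0). pose proof (pos_INR k). field. split; lra.
Qed.

Lemma F2_S k n : F2 k (S n) = F2 k n * ratio2 k n.
Proof.
  unfold F2, ratio2, B2. cbn [prod_upto]. rewrite f2_S.
  pose proof (pos_INR k). pose proof (pos_INR n). field. repeat split; lra.
Qed.

Lemma ratio2_le k n : Rabs (ratio2 k n) <= 1/2.
Proof.
  pose proof (pos_INR k). pose proof (pos_INR n).
  apply Rabs_frac_le; [nonneg_poly | repeat apply Rmult_lt_0_compat; lra |].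
  apply Rge_le, Rminus_ge, Rle_ge. unfold Rminus. field_simplify. nonneg_poly.
Qed.

Lemma F2_wz k n : F2 k n - F2 k (S n) = F2 k n * cert2 k n - F2 (S k) n * cert2 (S k) n.
Proof.
  unfold F2. cbn [prod_upto]. rewrite f2_S, f2_succ_k. unfold cert2, B2. rewrite S_INR.
  pose proof (pos_INR k). pose proof (pos_INR n). field. repeat split; lra.
Qed.

Lemma cert2_le k n : Rabs (cert2 k n) <= 20 * (INR n + 1) * (INR k + 1).
Proof.
  pose proof (pos_INR k). pose proof (pos_INR n).
  apply Rabs_frac_le; [nonneg_poly | repeat apply Rmult_lt_0_compat; lra |].
  apply Rge_le, Rminus_ge, Rle_ge. unfold Rminus. field_simplify. nonneg_poly.
Qed.

Lemma cert2_pos k n : 0 < cert2 k n.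
Proof.
  unfold cert2. pose proof (pos_INR k). pose proof (pos_INR n).
  apply Rdiv_lt_0_compat; [|repeat apply Rmult_lt_0_compat; lra].
  apply Rplus_le_lt_0_compat; [nonneg_poly|]. nra.
Qed.

Definition term2 (n : nat) : R :=
  (27 * INR n ^ 2 + 51 * INR n + 23) * poch (2/3) n
  / ((3 * INR n + 1) * (3 * INR n + 4) * (INR n + 1) * poch (11/6) n)
  / 4 ^ n.

Lemma term2_S n : term2 (S n) * cert2 O n = term2 n * ratio2 O n * cert2 O (S n).
Proof.
  unfold term2, ratio2, cert2. rewrite !poch_S, S_INR. simpl (INR 0).
  pose proof (pos_INR n). pose proof (poch_pos (2/3) n ltac:(lra)).
  pose proof (poch_pos (11/6) n ltac:(lra)). pose proof (pow_lt 4 n ltac:(lra)).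
  simpl pow. field. repeat split; lra.
Qed.

Lemma series2 : is_series term2 (30 * (1/2 - sqrt 3 * PI / 18)).
Proof.
  apply (wz_series_S1 term2 F2 cert2 ratio2 (fun n => 20 * (INR n + 1)) 30 (1/2)).
  - lra.
  - exact F2_0.
  - exact F2_S.
  - exact ratio2_le.
  - exact F2_wz.
  - exact cert2_le.
  - intro n. apply cert2_pos.
  - unfold term2, F2, f2, poch_ratio, cert2. simpl. field.
  - exact term2_S.
Qed.

Definition f3 k n := poch_ratio (INR k + 2/3) n * poch_ratio (INR k + 4/3) n.
Definition F3 k n := 16/9 * prod_upto B1 n * f3 k n.
Definition cert3 k n := (INR k ^ 3 / 2 + (13 * INR n + 11) / 4 * INR k ^ 2
   + (126 * INR n ^ 2 + 216 * INR n + 89) / 18 * INR k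
   + (189 * INR n ^ 3 + 495 * INR n ^ 2 + 414 * INR n + 110) / 36)
   / ((INR n + 1/2) * (INR k + 2 * INR n + 5/3) * (INR k + 2 * INR n + 7/3)).
Definition ratio3 k n :=
  (INR n + 1) * (3 * INR n + 1) * (3 * INR n + 5) * (INR k + 2/3 + INR n) * (INR k + 4/3 + INR n) /
  (18 * (2 * INR n + 1) * ((INR k + 2/3 + 2 * INR n + 1) * (INR k + 2/3 + 2 * INR n + 2))
     * ((INR k + 4/3 + 2 * INR n + 1) * (INR k + 4/3 + 2 * INR n + 2))).

Lemma f3_S k n : f3 k (S n) = f3 k n *
  ((INR k + 2/3 + INR n) / ((INR k + 2/3 + 2 * INR n + 1) * (INR k + 2/3 + 2 * INR n + 2))
   * ((INR k + 4/3 + INR n) / ((INR k + 4/3 + 2 * INR n + 1) * (INR k + 4/3 + 2 * INR n + 2)))).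
Proof.
  unfold f3. pose proof (pos_INR k). pose proof (pos_INR n).
  rewrite !poch_ratio_S by lra.
  pose proof (poch_ratio_pos (INR k + 2/3) n ltac:(lra)).
  pose proof (poch_ratio_pos (INR k + 4/3) n ltac:(lra)).
  field. repeat split; lra.
Qed.

Lemma f3_succ_k k n : f3 (S k) n = f3 k n *
  ((INR k + 2/3 + INR n) / (INR k + 2/3 + 2 * INR n + 1)
   * ((INR k + 4/3 + INR n) / (INR k + 4/3 + 2 * INR n + 1))).
Proof.
  unfold f3. pose proof (pos_INR k). pose proof (pos_INR n).
  replace (INR (S k) + 2/3) with (INR k + 2/3 + 1) by (rewrite S_INR; ring).
  replace (INR (S k) + 4/3) with (INR k + 4/3 + 1) by (rewrite S_INR; ring).
  rewrite !poch_ratio_shift by lra.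
  pose proof (poch_ratio_pos (INR k + 2/3) n ltac:(lra)).
  pose proof (poch_ratio_pos (INR k + 4/3) n ltac:(lra)).
  field. repeat split; lra.
Qed.

Lemma F3_0 k : F3 k O = 16 * S1_term k.
Proof.
  unfold F3, f3, poch_ratio, S1_term. cbn [prod_upto]. simpl (2 * 0 + 1)%nat.
  cbn [poch]. simpl (INR 0). pose proof (pos_INR k). field. split; lra.
Qed.

Lemma F3_S k n : F3 k (S n) = F3 k n * ratio3 k n.
Proof.
  unfold F3, ratio3, B1. cbn [prod_upto]. rewrite f3_S.
  pose proof (pos_INR k). pose proof (pos_INR n). field. repeat split; lra.
Qed.

Lemma ratio3_le k n : Rabs (ratio3 k n) <= 1/4.
Proof.
  pose proof (pos_INR k). pose proof (pos_INR n).
  apply Rabs_frac_le; [nonneg_poly | repeat apply Rmult_lt_0_compat; lra |].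
  apply Rge_le, Rminus_ge, Rle_ge. unfold Rminus. field_simplify. nonneg_poly.
Qed.

Lemma F3_wz k n : F3 k n - F3 k (S n) = F3 k n * cert3 k n - F3 (S k) n * cert3 (S k) n.
Proof.
  unfold F3. cbn [prod_upto]. rewrite f3_S, f3_succ_k. unfold cert3, B1. rewrite S_INR.
  pose proof (pos_INR k). pose proof (pos_INR n). field. repeat split; lra.
Qed.

Lemma cert3_le k n : Rabs (cert3 k n) <= 20 * (INR n + 1) * (INR k + 1).
Proof.
  pose proof (pos_INR k). pose proof (pos_INR n).
  apply Rabs_frac_le; [nonneg_poly | repeat apply Rmult_lt_0_compat; lra |].
  apply Rge_le, Rminus_ge, Rle_ge. unfold Rminus. field_simplify. nonneg_poly.
Qed.

Lemma cert3_pos k n : 0 < cert3 k n.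
Proof.
  unfold cert3. pose proof (pos_INR k). pose proof (pos_INR n).
  apply Rdiv_lt_0_compat; [|repeat apply Rmult_lt_0_compat; lra].
  apply Rplus_le_lt_0_compat; [nonneg_poly|]. nra.
Qed.

Definition term3 (n : nat) : R :=
  (189 * INR n ^ 3 + 495 * INR n ^ 2 + 414 * INR n + 110)
  / ((6 * INR n + 1) * (6 * INR n + 7) * (6 * INR n + 5) * (2 * INR n + 1))
  / binom (6 * n)%nat (3 * n)%nat.

Lemma term3_S n : term3 (S n) * cert3 O n = term3 n * ratio3 O n * cert3 O (S n).
Proof.
  unfold term3, ratio3, cert3. rewrite binom_6n_S, S_INR. simpl (INR 0).
  pose proof (pos_INR n). pose proof (binom_pos (6 * n) (3 * n)).
  field. repeat split; lra.
Qed.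

Lemma series3 : is_series term3 (16 * (1/2 - sqrt 3 * PI / 18)).
Proof.
  apply (wz_series_S1 term3 F3 cert3 ratio3 (fun n => 20 * (INR n + 1)) 16 (1/4)).
  - lra.
  - exact F3_0.
  - exact F3_S.
  - exact ratio3_le.
  - exact F3_wz.
  - exact cert3_le.
  - intro n. apply cert3_pos.
  - unfold term3, F3, f3, poch_ratio, cert3, binom, Binomial.C. simpl. field.
  - exact term3_S.
Qed.

Definition B4 n := - ((3 * INR n + 5) / 3).
Definition f4 k n := poch_ratio (INR k + 2/3) n / (INR k + 4/3 + 2 * INR n).
Definition F4 k n := 40/3 * prod_upto B4 n * f4 k n.
Definition cert4 k n := (INR k ^ 3 + (7 * INR n + 19/3) * INR k ^ 2
   + (15 * INR n ^ 2 + 80 * INR n / 3 + 104/9) * INR k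
   + (270 * INR n ^ 3 + 720 * INR n ^ 2 + 633 * INR n + 185) / 27)
   / ((INR n + 1) * (INR k + 2 * INR n + 5/3) * (INR k + 2 * INR n + 7/3)).
Definition ratio4 k n := - ((3 * INR n + 5) * (INR k + 2/3 + INR n) * (INR k + 4/3 + 2 * INR n) /
  (3 * ((INR k + 2/3 + 2 * INR n + 1) * (INR k + 2/3 + 2 * INR n + 2)) * (INR k + 4/3 + 2 * INR n + 2))).

Lemma f4_S k n : f4 k (S n) = f4 k n *
  ((INR k + 2/3 + INR n) / ((INR k + 2/3 + 2 * INR n + 1) * (INR k + 2/3 + 2 * INR n + 2))
   * ((INR k + 4/3 + 2 * INR n) / (INR k + 4/3 + 2 * INR n + 2))).
Proof.
  unfold f4. pose proof (pos_INR k). pose proof (pos_INR n).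
  rewrite poch_ratio_S, S_INR by lra.
  pose proof (poch_ratio_pos (INR k + 2/3) n ltac:(lra)).
  field. repeat split; lra.
Qed.

Lemma f4_succ_k k n : f4 (S k) n = f4 k n *
  ((INR k + 2/3 + INR n) / (INR k + 2/3 + 2 * INR n + 1)
   * ((INR k + 4/3 + 2 * INR n) / (INR k + 4/3 + 2 * INR n + 1))).
Proof.
  unfold f4. pose proof (pos_INR k). pose proof (pos_INR n).
  replace (INR (S k) + 2/3) with (INR k + 2/3 + 1) by (rewrite S_INR; ring).
  rewrite poch_ratio_shift, S_INR by lra.
  pose proof (poch_ratio_pos (INR k + 2/3) n ltac:(lra)).
  field. repeat split; lra.
Qed.

Lemma F4_0 k : F4 k O = 120 * S1_term k.
Proof.
  unfold F4, f4, poch_ratio, S1_term. cbn [prod_upto]. simpl (2 * 0 + 1)%nat.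
  cbn [poch]. simpl (INR 0). pose proof (pos_INR k). field. split; lra.
Qed.

Lemma F4_S k n : F4 k (S n) = F4 k n * ratio4 k n.
Proof.
  unfold F4, ratio4, B4. cbn [prod_upto]. rewrite f4_S.
  pose proof (pos_INR k). pose proof (pos_INR n). field. repeat split; lra.
Qed.

Lemma ratio4_le k n : Rabs (ratio4 k n) <= 3/4.
Proof.
  pose proof (pos_INR k). pose proof (pos_INR n). unfold ratio4. rewrite Rabs_Ropp.
  apply Rabs_frac_le; [nonneg_poly | repeat apply Rmult_lt_0_compat; lra |].
  apply Rge_le, Rminus_ge, Rle_ge. unfold Rminus. field_simplify. nonneg_poly.
Qed.

Lemma F4_wz k n : F4 k n - F4 k (S n) = F4 k n * cert4 k n - F4 (S k) n * cert4 (S k) n.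
Proof.
  unfold F4. cbn [prod_upto]. rewrite f4_S, f4_succ_k. unfold cert4, B4. rewrite S_INR.
  pose proof (pos_INR k). pose proof (pos_INR n). field. repeat split; lra.
Qed.

Lemma cert4_le k n : Rabs (cert4 k n) <= 20 * (INR n + 1) * (INR k + 1).
Proof.
  pose proof (pos_INR k). pose proof (pos_INR n).
  apply Rabs_frac_le; [nonneg_poly | repeat apply Rmult_lt_0_compat; lra |].
  apply Rge_le, Rminus_ge, Rle_ge. unfold Rminus. field_simplify. nonneg_poly.
Qed.

Lemma cert4_pos k n : 0 < cert4 k n.
Proof.
  unfold cert4. pose proof (pos_INR k). pose proof (pos_INR n).
  apply Rdiv_lt_0_compat; [|repeat apply Rmult_lt_0_compat; lra].
  apply Rplus_le_lt_0_compat; [nonneg_poly|]. nra.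
Qed.

Definition term4 (n : nat) : R :=
  (270 * INR n ^ 3 + 720 * INR n ^ 2 + 633 * INR n + 185)
  / ((INR n + 1) * (6 * INR n + 7))
  * (poch (2/3) n ^ 2 / (poch (4/3) n * poch (11/6) n))
  / (-4) ^ n.

Lemma term4_S n : term4 (S n) * cert4 O n = term4 n * ratio4 O n * cert4 O (S n).
Proof.
  unfold term4, ratio4, cert4. rewrite !poch_S, S_INR. simpl (INR 0).
  pose proof (pos_INR n). pose proof (poch_pos (2/3) n ltac:(lra)).
  pose proof (poch_pos (4/3) n ltac:(lra)). pose proof (poch_pos (11/6) n ltac:(lra)).
  pose proof (pow_nonzero (-4) n ltac:(lra)).
  simpl pow. field. repeat split; lra.
Qed.

Lemma series4 : is_series term4 (120 * (1/2 - sqrt 3 * PI / 18)).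
Proof.
  apply (wz_series_S1 term4 F4 cert4 ratio4 (fun n => 20 * (INR n + 1)) 120 (3/4)).
  - lra.
  - exact F4_0.
  - exact F4_S.
  - exact ratio4_le.
  - exact F4_wz.
  - exact cert4_le.
  - intro n. apply cert4_pos.
  - unfold term4, F4, f4, poch_ratio, cert4. simpl. field.
  - exact term4_S.
Qed.

Definition B5 n := - ((INR n + 1) * (6 * INR n + 1) * (3 * INR n + 2) / (9 * (2 * INR n + 1))).
Definition f5 k n := poch_ratio (INR k + 2/3) n / poch (INR k + 4/3) (S n).
Definition F5 k n := 80/9 * prod_upto B5 n * f5 k n.
Definition cert5 k n := (INR k ^ 2 / 2 + (2 * INR n + 19/12) * INR k
   + (30 * INR n ^ 2 + 45 * INR n + 16) / 12)
   / ((INR n + 1/2) * (INR k + 2 * INR n + 5/3)).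
Definition ratio5 k n :=
  - ((INR n + 1) * (6 * INR n + 1) * (3 * INR n + 2) * (INR k + 2/3 + INR n) /
     (9 * (2 * INR n + 1) * ((INR k + 2/3 + 2 * INR n + 1) * (INR k + 2/3 + 2 * INR n + 2))
      * (INR k + 4/3 + INR n + 1))).

Lemma f5_S k n : f5 k (S n) = f5 k n *
  ((INR k + 2/3 + INR n) / ((INR k + 2/3 + 2 * INR n + 1) * (INR k + 2/3 + 2 * INR n + 2))
   / (INR k + 4/3 + INR n + 1)).
Proof.
  unfold f5. pose proof (pos_INR k). pose proof (pos_INR n).
  rewrite poch_ratio_S, (poch_S _ (S n)), S_INR by lra.
  pose proof (poch_ratio_pos (INR k + 2/3) n ltac:(lra)).
  pose proof (poch_pos (INR k + 4/3) (S n) ltac:(lra)).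
  field. repeat split; lra.
Qed.

Lemma f5_succ_k k n : f5 (S k) n = f5 k n *
  ((INR k + 2/3 + INR n) / (INR k + 2/3 + 2 * INR n + 1)
   * ((INR k + 4/3) / (INR k + 4/3 + INR n + 1))).
Proof.
  unfold f5. pose proof (pos_INR k). pose proof (pos_INR n).
  replace (INR (S k) + 2/3) with (INR k + 2/3 + 1) by (rewrite S_INR; ring).
  replace (INR (S k) + 4/3) with (INR k + 4/3 + 1) by (rewrite S_INR; ring).
  rewrite poch_ratio_shift, poch_shift, S_INR by lra.
  pose proof (poch_ratio_pos (INR k + 2/3) n ltac:(lra)).
  pose proof (poch_pos (INR k + 4/3) (S n) ltac:(lra)).
  field. repeat split; lra.
Qed.

Lemma F5_0 k : F5 k O = 80 * S1_term k.
Proof.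
  unfold F5, f5, poch_ratio, S1_term. cbn [prod_upto]. simpl (2 * 0 + 1)%nat.
  cbn [poch]. simpl (INR 0). pose proof (pos_INR k). field. split; lra.
Qed.

Lemma F5_S k n : F5 k (S n) = F5 k n * ratio5 k n.
Proof.
  unfold F5, ratio5, B5. cbn [prod_upto]. rewrite f5_S.
  pose proof (pos_INR k). pose proof (pos_INR n). field. repeat split; lra.
Qed.

Lemma ratio5_le k n : Rabs (ratio5 k n) <= 1/2.
Proof.
  pose proof (pos_INR k). pose proof (pos_INR n). unfold ratio5. rewrite Rabs_Ropp.
  apply Rabs_frac_le; [nonneg_poly | repeat apply Rmult_lt_0_compat; lra |].
  apply Rge_le, Rminus_ge, Rle_ge. unfold Rminus. field_simplify. nonneg_poly.
Qed.

Lemma F5_wz k n : F5 k n - F5 k (S n) = F5 k n * cert5 k n - F5 (S k) n * cert5 (S k) n.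
Proof.
  unfold F5. cbn [prod_upto]. rewrite f5_S, f5_succ_k. unfold cert5, B5. rewrite S_INR.
  pose proof (pos_INR k). pose proof (pos_INR n). field. repeat split; lra.
Qed.

Lemma cert5_le k n : Rabs (cert5 k n) <= 20 * (INR n + 1) * (INR k + 1).
Proof.
  pose proof (pos_INR k). pose proof (pos_INR n).
  apply Rabs_frac_le; [nonneg_poly | repeat apply Rmult_lt_0_compat; lra |].
  apply Rge_le, Rminus_ge, Rle_ge. unfold Rminus. field_simplify. nonneg_poly.
Qed.

Lemma cert5_pos k n : 0 < cert5 k n.
Proof.
  unfold cert5. pose proof (pos_INR k). pose proof (pos_INR n).
  apply Rdiv_lt_0_compat; [|repeat apply Rmult_lt_0_compat; lra].
  apply Rplus_le_lt_0_compat; [nonneg_poly|]. nra.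
Qed.

Definition term5 (n : nat) : R :=
  (30 * INR n ^ 2 + 45 * INR n + 16)
  * (poch (1/6) n * poch (2/3) n ^ 2 * poch 1 n
     / (poch (4/3) n * poch (7/3) n * poch (3/2) n * poch (11/6) n))
  / (-4) ^ n.

Lemma term5_S n : term5 (S n) * cert5 O n = term5 n * ratio5 O n * cert5 O (S n).
Proof.
  unfold term5, ratio5, cert5. rewrite !poch_S, S_INR. simpl (INR 0).
  pose proof (pos_INR n). pose proof (poch_pos (2/3) n ltac:(lra)).
  pose proof (poch_pos (1/6) n ltac:(lra)). pose proof (poch_pos 1 n ltac:(lra)).
  pose proof (poch_pos (4/3) n ltac:(lra)). pose proof (poch_pos (11/6) n ltac:(lra)).
  pose proof (poch_pos (7/3) n ltac:(lra)). pose proof (poch_pos (3/2) n ltac:(lra)).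
  pose proof (pow_nonzero (-4) n ltac:(lra)).
  simpl pow. field. repeat split; lra.
Qed.

Lemma series5 : is_series term5 (80 * (1/2 - sqrt 3 * PI / 18)).
Proof.
  apply (wz_series_S1 term5 F5 cert5 ratio5 (fun n => 20 * (INR n + 1)) 80 (1/2)).
  - lra.
  - exact F5_0.
  - exact F5_S.
  - exact ratio5_le.
  - exact F5_wz.
  - exact cert5_le.
  - intro n. apply cert5_pos.
  - unfold term5, F5, f5, poch_ratio, cert5. simpl. field.
  - exact term5_S.
Qed.

Theorem proposition3p2 :
  is_series S1_term (1/2 - sqrt 3 * PI / 18) /\
  (let S1 := 1/2 - sqrt 3 * PI / 18 in
   is_series (fun n : nat =>
       / ((3 * INR n + 1) * (3 * INR n + 4) * binom (2 * n + 2)%nat (n + 1)%nat))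
     (2/3 * S1) /\
   is_series (fun n : nat =>
       (27 * INR n ^ 2 + 51 * INR n + 23) * poch (2/3) n
       / ((3 * INR n + 1) * (3 * INR n + 4) * (INR n + 1) * poch (11/6) n)
       / 4 ^ n)
     (30 * S1) /\
   is_series (fun n : nat =>
       (189 * INR n ^ 3 + 495 * INR n ^ 2 + 414 * INR n + 110)
       / ((6 * INR n + 1) * (6 * INR n + 7) * (6 * INR n + 5) * (2 * INR n + 1))
       / binom (6 * n)%nat (3 * n)%nat)
     (16 * S1) /\
   is_series (fun n : nat =>
       (270 * INR n ^ 3 + 720 * INR n ^ 2 + 633 * INR n + 185)
       / ((INR n + 1) * (6 * INR n + 7))
       * (poch (2/3) n ^ 2 / (poch (4/3) n * poch (11/6) n))
       / (-4) ^ n)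
     (120 * S1) /\
   is_series (fun n : nat =>
       (30 * INR n ^ 2 + 45 * INR n + 16)
       * (poch (1/6) n * poch (2/3) n ^ 2 * poch 1 n
          / (poch (4/3) n * poch (7/3) n * poch (3/2) n * poch (11/6) n))
       / (-4) ^ n)
     (80 * S1)).
Proof.
  split; [exact S1_series|].
  exact (conj series1 (conj series2 (conj series3 (conj series4 series5)))).
Qed.
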